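(* For every connected graph $G$ with at least two vertices, $h_1(G)\le 2\,h_2(G)+1$.
   Context: All graphs are finite, simple, undirected and connected. A configuration of $k$ agents is a $k$-tuple $(v_1,\dots,v_k)$ of pairwise distinct vertices of $G$ whose induced subgraph is connected (for $k=2$: an ordered pair of endpoints of an edge). Two configurations $(v_1,\dots,v_k)$, $(v'_1,\dots,v'_k)$ are adjacent if for every $i$ either $v_i=v'_i$ or $(v_i,v'_i)\in E$. A transition walk of length $l$ is a sequence $\mathcal C_0,\dots,\mathcal C_l$ of configurations with consecutive ones adjacent; it is spanning if every vertex of $G$ lies in some $\mathcal C_t$. $h_k(G)$ is the minimum length of a spanning transition walk with $k$ agents; $h_1(G)$ is thus the minimum length of a walk visiting all vertices. *)

(* A finite simple graph is a symmetric irreflexive relation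
   e on a finType T. *)
From mathcomp Require Import all_boot.
Set Implicit Arguments. Unset Strict Implicit. Unset Printing Implicit Defensive.

Section Agents.
Variables (T : finType) (e : rel T).

Definition connected_graph : Prop := forall x y : T, connect e x y.

Definition induced_rel (A : pred T) : rel T :=
  fun x y => [&& x \in A, y \in A & e x y].

Definition is_config (k : nat) (c : k.-tuple T) : bool :=
  uniq c &&
  [forall x, forall y,
     ((x \in (c : seq T)) && (y \in (c : seq T))) ==>
       connect (induced_rel (mem (c : seq T))) x y].

Definition config_adj (k : nat) (c c' : k.-tuple T) : bool :=
  [forall i : 'I_k, (tnth c i == tnth c' i) || e (tnth c i) (tnth c' i)].

Definition transition_walk (k l : nat) (s : seq (k.-tuple T)) : Prop :=
  [/\ size s = l.+1, all (@is_config k) s &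
      (if s is c0 :: s' then path (@config_adj k) c0 s' else True)].

Definition spanning (k : nat) (s : seq (k.-tuple T)) : Prop :=
  forall v : T, exists2 c, c \in s & v \in (c : seq T).

Definition has_spanning_walk (k l : nat) : Prop :=
  exists s : seq (k.-tuple T), transition_walk l s /\ spanning s.

(* is_h k n  <->  h_k(G) = n, i.e. n is the minimum length of a spanning
   transition walk with k agents. *)
Definition is_h (k n : nat) : Prop :=
  has_spanning_walk k n /\ forall m, has_spanning_walk k m -> n <= m.

End Agents.

(* A 2-agent walk is turned into a 1-agent walk by a zigzag: the single agent
   stands on one endpoint of the current configuration, crosses the edge to the
   other endpoint, then follows that agent to the next configuration, where it
   is again on an endpoint. Every configuration costs one crossing and every
   transition one move, so a 2-agent walk of length l yields a 1-agent walk of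
   length 2l + 1 visiting every vertex the two agents occupied. A spanning
   2-agent walk exists because the windows of consecutive vertex pairs along a
   walk through all vertices form one. *)
From mathcomp Require Import all_boot.
From Stdlib Require Wf_nat Classical_Prop.
Set Implicit Arguments. Unset Strict Implicit. Unset Printing Implicit Defensive.

Lemma ex_minimal (P : nat -> Prop) :
  (exists n, P n) -> exists n, P n /\ forall m, P m -> n <= m.
Proof.
move=> exP.
have [n [[Pn minP] _]] := Wf_nat.dec_inh_nat_subset_has_unique_least_element
  P (fun n => Classical_Prop.classic (P n)) exP.
by exists n; split=> // m /minP /leP.
Qed.

Lemma is_h_exists (T : finType) (e : rel T) k :
  (exists n, has_spanning_walk e k n) -> exists n, is_h e k n.
Proof. exact: ex_minimal. Qed.

Lemma connected_path_cover (T : finType) (e : rel T) (vs : seq T) x :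
  connected_graph e -> exists2 p, path e x p & {subset vs <= x :: p}.
Proof.
move=> conn_e; elim: vs x => [|v vs IH] x; first by exists [::].
have /connectP [q e_q ->] := conn_e x v.
have [p e_p sub_p] := IH (last x q).
exists (q ++ p); first by rewrite cat_path e_q.
have last_in : last x q \in x :: q ++ p by rewrite -cat_cons mem_cat mem_last.
move=> u; rewrite inE => /predU1P [-> //|/sub_p].
by rewrite inE => /predU1P [-> //|u_p]; rewrite -cat_cons mem_cat u_p orbT.
Qed.

Section OneAndTwoAgents.
Variables (T : finType) (e : rel T).

Definition stay_or_move (x y : T) : bool := (x == y) || e x y.

Lemma is_config1 x : is_config e [tuple x].
Proof.
apply/andP; split=> //; apply/forallP=> y; apply/forallP=> z.
by apply/implyP; rewrite !inE => /andP [/eqP -> /eqP ->].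
Qed.

Lemma config_adj1 x y : config_adj e [tuple x] [tuple y] = stay_or_move x y.
Proof. by apply/forallP/idP => [/(_ ord0)|xy i]; rewrite ?(ord1 i). Qed.

Lemma path_walk1 x w :
  path stay_or_move x w -> transition_walk e (size w) [seq [tuple y] | y <- x :: w].
Proof.
move=> xw; split; first by rewrite size_map.
  by apply/allP=> c /mapP [y _ ->]; exact: is_config1.
elim: w x xw => //= y w IH x /andP [xy yw].
by rewrite config_adj1 xy IH.
Qed.

Lemma spanning_walk1 (w : seq T) :
  (forall v, v \in w) -> spanning [seq [tuple y] | y <- w].
Proof. by move=> w_all v; exists [tuple v]; rewrite ?map_f ?inE. Qed.

Definition agent (c : 2.-tuple T) (b : bool) : T :=
  tnth c (if b then ord0 else ord_max).

Lemma tuple2_agentE (c : 2.-tuple T) : c = [tuple agent c true; agent c false].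
Proof. by case: c => [[|a [|b [|]]] //] c_size; apply: val_inj. Qed.

Lemma mem_tuple2 (c : 2.-tuple T) v :
  (v \in (c : seq T)) = (v == agent c true) || (v == agent c false).
Proof. by rewrite {1}(tuple2_agentE c) !inE. Qed.

Lemma config_adj_agent (c c' : 2.-tuple T) b :
  config_adj e c c' -> stay_or_move (agent c b) (agent c' b).
Proof. by move/forallP/(_ (if b then ord0 else ord_max)). Qed.

Lemma config_adj2 a b a' b' :
  config_adj e [tuple a; b] [tuple a'; b'] = stay_or_move a a' && stay_or_move b b'.
Proof.
apply/idP/andP => [adj | [aa' bb']].
  by split; [exact: (config_adj_agent true adj) | exact: (config_adj_agent false adj)].
by apply/forallP => -[[|[|]]].
Qed.

Hypotheses (e_sym : symmetric e) (e_irr : irreflexive e).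

Lemma is_config2 a b : is_config e [tuple a; b] = e a b.
Proof.
rewrite /is_config /= inE andbT.
apply/andP/idP => [[a_neq_b /forallP /(_ a) /forallP /(_ b)] | eab].
  rewrite !inE !eqxx orbT => /connectP [[|z p] /= ind_path last_p].
    by rewrite last_p eqxx in a_neq_b.
  move: ind_path => /andP [/and3P [_ z_ab eaz] _].
  by move: z_ab eaz; rewrite !inE => /predU1P [->|/eqP -> //]; rewrite e_irr.
have ind_ab : induced_rel e (mem [:: a; b]) a b by rewrite /induced_rel !inE !eqxx eab orbT.
have ind_ba : induced_rel e (mem [:: a; b]) b a by rewrite /induced_rel !inE !eqxx e_sym eab orbT.
split; first by apply: contraTneq eab => ->; rewrite e_irr.
apply/forallP=> x; apply/forallP=> y; apply/implyP.
by rewrite !inE => /andP [/predU1P [->|/eqP ->] /predU1P [->|/eqP ->]];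
  rewrite ?connect0 ?connect1.
Qed.

Lemma config2_edge (c : 2.-tuple T) b : is_config e c -> e (agent c b) (agent c (~~ b)).
Proof.
rewrite {1}(tuple2_agentE c) is_config2.
by case: b => //=; rewrite e_sym.
Qed.

Fixpoint zigzag (b : bool) (s : seq (2.-tuple T)) : seq T :=
  if s is c :: s' then agent c b :: agent c (~~ b) :: zigzag (~~ b) s' else [::].

Lemma size_zigzag b s : size (zigzag b s) = (size s).*2.
Proof. by elim: s b => //= c s IH b; rewrite IH doubleS. Qed.

Lemma mem_zigzag b s v : (v \in zigzag b s) = has (fun c : 2.-tuple T => v \in (c : seq T)) s.
Proof.
elim: s b => //= c s IH b; rewrite !inE IH mem_tuple2 orbA.
by case: b; rewrite // [(v == _) || _]orbC.
Qed.

Lemma zigzag_path b c s :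
  all (@is_config _ e 2) (c :: s) -> path (@config_adj _ e 2) c s ->
  path stay_or_move (agent c b) (behead (zigzag b (c :: s))).
Proof.
elim: s b c => [|c' s IH] b c /andP [c_conf s_conf] /=.
  by rewrite /stay_or_move config2_edge ?orbT.
case/andP=> cc' c's; rewrite (config_adj_agent (~~ b) cc').
by rewrite /stay_or_move config2_edge ?orbT //; exact: IH.
Qed.

Lemma spanning_walk2_to_1 l :
  has_spanning_walk e 2 l -> has_spanning_walk e 1 (l.*2.+1).
Proof.
case=> -[|c s] [[//= [<-] s_conf cs] span_s].
have w_path := zigzag_path true s_conf cs.
exists [seq [tuple y] | y <- agent c true :: behead (zigzag true (c :: s))]; split.
  by have := path_walk1 w_path; rewrite /= size_zigzag.
apply: spanning_walk1 => v; have [c' c'_s v_c'] := span_s v.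
by rewrite -[_ :: _]/(zigzag true (c :: s)) mem_zigzag; apply/hasP; exists c'.
Qed.

Lemma path_walk2 x y p :
  path e x (y :: p) -> transition_walk e (size p) (pairmap (fun a b => [tuple a; b]) x (y :: p)).
Proof.
move=> xyp; split; first by rewrite size_pairmap.
  elim: (y :: p) x xyp => //= z q IH x /andP [exz zq].
  by rewrite is_config2 exz IH.
elim: p x y xyp => //= z p IH x y /andP [exy /[dup] /andP [eyz _] yzp].
by rewrite config_adj2 /stay_or_move exy eyz !orbT (IH y z yzp).
Qed.

Lemma spanning_pairmap (x y : T) (p : seq T) :
  (forall v, v \in x :: y :: p) -> spanning (pairmap (fun a b => [tuple a; b]) x (y :: p)).
Proof.
move=> xyp_all v; elim: p x y {xyp_all}(xyp_all v) => [|z p IH] x y.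
  by move=> v_xy; exists [tuple x; y]; first exact: mem_head.
rewrite inE => /predU1P [->|v_yzp]; first by exists [tuple x; y]; exact: mem_head.
by have [c c_s v_c] := IH y z v_yzp; exists c; rewrite // inE c_s orbT.
Qed.

End OneAndTwoAgents.

Theorem mainTheorem8 (T : finType) (e : rel T) :
  symmetric e -> irreflexive e -> connected_graph e -> 1 < #|T| ->
  exists h1 h2 : nat, [/\ is_h e 1 h1, is_h e 2 h2 & h1 <= 2 * h2 + 1].
Proof.
move=> e_sym e_irr conn_e /card_gt1P [x [y [_ _ x_neq_y]]].
have [p e_p cover_p] := connected_path_cover (enum T) x conn_e.
have all_xp v : v \in x :: p by rewrite cover_p ?mem_enum.
case: p {cover_p} e_p all_xp => [|y' p] e_p all_xp.
  by move: (all_xp y); rewrite inE eq_sym (negbTE x_neq_y).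
have [h2 h2_min] : exists h2, is_h e 2 h2.
  apply: is_h_exists; exists (size p).
  by exists (pairmap (fun a b => [tuple a; b]) x (y' :: p));
    split; [exact: path_walk2 | exact: spanning_pairmap].
have walk1 := spanning_walk2_to_1 e_sym e_irr h2_min.1.
have [h1 h1_min] := is_h_exists (ex_intro _ _ walk1).
by exists h1, h2; split; rewrite // mul2n addn1 h1_min.2.
Qed.
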